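(* Let $G$ be a finite group with $|G|\geq3$. Let $\mathcal{C}$ be a cycle of $\mathcal{P}(G)$ of maximum length. Then $\ell(\mathcal{C})\geq\max_{x\in G} o(x)$.
   Context: The power graph $\mathcal{P}(G)$ has vertex set $G$, and distinct $x,y$ are adjacent iff one is a positive integer power of the other. A cycle is a subgraph whose $k\ge3$ distinct vertices can be arranged cyclically with consecutive vertices adjacent; its length $\ell(\mathcal{C})$ is its number of edges ($=k$). $o(x)$ is the order of $x$. *)

From mathcomp Require Import all_boot all_fingroup.
Set Implicit Arguments. Unset Strict Implicit. Unset Printing Implicit Defensive.
Local Open Scope group_scope.

Definition pow_adj (gT : finGroupType) (x y : gT) : Prop :=
  x <> y /\ ((exists k : nat, (0 < k)%N /\ x = y ^+ k) \/
             (exists k : nat, (0 < k)%N /\ y = x ^+ k)).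

(* A cycle of P(G): a list of k >= 3 distinct vertices, consecutive ones
   (cyclically) adjacent. Its length is the number of vertices = number of edges. *)
Definition is_pow_cycle (gT : finGroupType) (s : seq gT) : Prop :=
  uniq s /\ (3 <= size s)%N /\
  (forall i : nat, (i < size s)%N -> pow_adj (nth 1 s i) (nth 1 s (i.+1 %% size s))).

Definition cycle_length (gT : finGroupType) (s : seq gT) : nat := size s.

From mathcomp Require Import all_boot all_fingroup cyclic zify.

Set Implicit Arguments.
Unset Strict Implicit.
Unset Printing Implicit Defensive.

(* A cyclic group <[x]> of order n has totient d elements of each order d %| n,
   and two of its elements whose orders divide one another are powers of one
   another. So a cycle of P(G) through all of <[x]> comes from a cyclic
   arrangement of the divisors of n, d used at most totient d times, of length n,
   in which neighbours are comparable under divisibility. For n = p^a m with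
   p prime and coprime to m, such an arrangement is the one for n/p followed by
   p^a times the one for m repeated totient (p^a) times; rotating both so that
   the junctions sit at 1 and at n keeps every neighbour comparable. *)

Section SeqCycles.
Variables (T : eqType) (e : rel T).
Implicit Types (s t : seq T).

Lemma cycle_cat x0 s t :
    path.cycle e s -> path.cycle e t ->
    e (last x0 s) (head x0 t) -> e (last x0 t) (head x0 s) ->
  path.cycle e (s ++ t).
Proof.
case: s t => [|x s] [|y t] //=; rewrite ?cats0 // rcons_cat cat_path /= !rcons_path.
by move=> /andP[-> _] /andP[-> _] -> ->.
Qed.

Lemma cycle_nth x0 s i :
  path.cycle e s -> i < size s -> e (nth x0 s i) (nth x0 s (i.+1 %% size s)).
Proof.
case: s => // x s /(pathP x0) e_s /= lt_i_s.
have := e_s i; rewrite size_rcons -rcons_cons !nth_rcons lt_i_s => /(_ isT).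
have [lt_i_s' | ge_i_s] := ltnP i (size s); first by rewrite modn_small.
have -> : i = size s by lia.
by rewrite eqxx modnn.
Qed.

Lemma count_flatten_nseq (a : pred T) c s :
  count a (flatten (nseq c s)) = c * count a s.
Proof. by rewrite count_flatten map_nseq sumn_nseq mulnC. Qed.

Lemma size_flatten_nseq c s : size (flatten (nseq c s)) = c * size s.
Proof. by rewrite -!count_predT count_flatten_nseq. Qed.

Lemma mem_flatten_nseq c s x : (x \in flatten (nseq c s)) = (0 < c) && (x \in s).
Proof. by rewrite -!has_pred1 !has_count count_flatten_nseq muln_gt0. Qed.

Lemma cycle_flatten_nseq c s : path.cycle e s -> path.cycle e (flatten (nseq c s)).
Proof.
case: s => [|x s] e_s; first by elim: c.
have e_last : e (last x s) x by move: e_s; rewrite /= rcons_path => /andP[].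
elim: c => [|[|c] IHc] //; first by rewrite /= cats0.
have -> : flatten (nseq c.+2 (x :: s)) = (x :: s) ++ flatten (nseq c.+1 (x :: s)) by [].
apply: (cycle_cat (x0 := x)) e_s IHc _ _ => //=.
by elim: c => [|c IHc]; rewrite ?cats0 // last_cat.
Qed.

Lemma count_rot i (a : pred T) s : count a (rot i s) = count a s.
Proof. by rewrite /rot count_cat addnC -count_cat cat_take_drop. Qed.

End SeqCycles.

Lemma exists_uniq_lift (T : finType) (U : eqType) (f : T -> U) (A : {set T}) s :
    (forall u, count_mem u s <= #|[set y in A | f y == u]|) ->
  exists t, [/\ uniq t, {subset t <= A} & map f t = s].
Proof.
elim: s A => [|u s IHs] A count_s; first by exists [::].
have /card_gt0P[y] : 0 < #|[set y in A | f y == u]|.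
  by apply: leq_trans (count_s u); rewrite /= eqxx.
rewrite inE => /andP[Ay /eqP fy].
have [t [uniq_t sub_t ft]] : exists t, [/\ uniq t, {subset t <= A :\ y} & map f t = s].
  apply: IHs => v; have := count_s v; rewrite /= (cardsD1 y) !inE Ay fy eq_sym /=.
  rewrite leq_add2l => /leq_trans; apply.
  by apply: subset_leq_card; apply/subsetP => z; rewrite !inE andbA.
exists (y :: t); split; last by rewrite /= fy ft.
- by rewrite /= uniq_t andbT; apply/negP => /sub_t; rewrite !inE eqxx.
- by move=> z; rewrite inE => /predU1P[-> // | /sub_t /setD1P[]].
Qed.

Definition dvd_comparable : rel nat := fun a b => (a %| b) || (b %| a).

Definition divisor_cycle (n : nat) (s : seq nat) : Prop :=
  [/\ path.cycle dvd_comparable s, size s = n, all (dvdn^~ n) s,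
      forall d, count_mem d s <= totient d & (1 \in s) && (n \in s)].

Lemma divisor_cycle1 : divisor_cycle 1 [:: 1].
Proof. by split=> // d; rewrite /= addn0; case: eqP => // <-. Qed.

Lemma count_mem_map_muln q s d : 0 < q ->
  count_mem d (map (muln q) s) = if q %| d then count_mem (d %/ q) s else 0.
Proof.
move=> q_gt0; rewrite count_map; case: ifP => [/dvdnP[e ->] | q_ndvd_d].
  by rewrite mulnK //; apply: eq_count => y; rewrite /= [_ * q]mulnC eqn_pmul2l.
apply/eqP; rewrite -leqn0 leqNgt -has_count; apply/hasPn => y _ /=.
by apply/eqP => dE; rewrite -dE dvdn_mulr in q_ndvd_d.
Qed.

Lemma cycle_dvd_comparable_map_muln q s : 0 < q ->
  path.cycle dvd_comparable s -> path.cycle dvd_comparable (map (muln q) s).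
Proof.
move=> q_gt0; rewrite cycle_map; apply: sub_cycle => a b.
by rewrite /= /dvd_comparable !dvdn_pmul2l.
Qed.

Lemma divisor_cycle_pfactor p a m sk sm :
    prime p -> 0 < a -> coprime p m ->
    divisor_cycle (p ^ a.-1 * m) sk -> divisor_cycle m sm ->
  exists s, divisor_cycle (p ^ a * m) s.
Proof.
move=> p_pr a_gt0 co_pm [cyc_k size_k dvd_k tot_k /andP[k1 _]].
case=> [cyc_m size_m dvd_m tot_m /andP[_ mm]].
set q := p ^ a; set n := q * m; set c := totient q.
have q_gt0 : 0 < q by rewrite expn_gt0 prime_gt0.
have c_gt0 : 0 < c by rewrite totient_gt0.
set B := map (muln q) (flatten (nseq c sm)).
have nB : n \in B by rewrite map_f // mem_flatten_nseq c_gt0.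
have q_ndvd_k : ~~ (q %| p ^ a.-1 * m).
  rewrite Gauss_dvdl ?coprime_pexpl // dvdn_Pexp2l ?prime_gt1 //; lia.
have dvd_k_n d : d \in sk -> d %| n.
  move/(allP dvd_k)/dvdn_trans; apply.
  exact: dvdn_mul (dvdn_exp2l _ (leq_pred a)) (dvdnn m).
have dvd_B_n d : d \in B -> d %| n.
  case/mapP=> e; rewrite mem_flatten_nseq => /andP[_ /(allP dvd_m) e_dvd_m] ->.
  by rewrite dvdn_pmul2l.
exists (rot (index 1 sk) sk ++ rot (index n B) B); split.
- rewrite (rot_index k1) (rot_index nB); apply: (cycle_cat (x0 := 0)).
  + by rewrite -(rot_index k1) rot_cycle.
  + by rewrite -(rot_index nB) rot_cycle cycle_dvd_comparable_map_muln ?cycle_flatten_nseq.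
  + rewrite /dvd_comparable /= dvd_k_n //.
    by rewrite -(mem_rot (index 1 sk)) (rot_index k1) mem_last.
  + by rewrite /dvd_comparable /= dvd1n orbT.
- rewrite size_cat !size_rot size_k size_map size_flatten_nseq size_m /c totient_pfactor //.
  rewrite /n /q -{3}(prednK a_gt0) expnS; have := prime_gt0 p_pr; nia.
- by apply/allP => d; rewrite mem_cat !mem_rot => /orP[/dvd_k_n | /dvd_B_n].
- move=> d; rewrite count_cat !count_rot count_mem_map_muln //.
  have [/dvdnP[e ->] | _] := ifP; last by rewrite addn0 tot_k.
  rewrite mulnK // count_flatten_nseq.
  rewrite (_ : count_mem _ sk = 0); last first.
    apply/count_memPn; apply: contra q_ndvd_k => /(allP dvd_k); apply: dvdn_trans.
    exact: dvdn_mull.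
  have [e_sm | e_nsm] := boolP (e \in sm); last by rewrite (count_memPn e_nsm) muln0.
  have co_eq : coprime e q.
    by rewrite coprime_sym coprime_pexpl // (coprime_dvdr (allP dvd_m e e_sm)).
  by rewrite add0n mulnC totient_coprime // leq_mul ?tot_m.
- by rewrite (rot_index k1) (rot_index nB) mem_head mem_cat mem_head orbT.
Qed.

Lemma divisor_cycle_exists n : 0 < n -> exists s, divisor_cycle n s.
Proof.
elim/ltn_ind: n => n IHn n_gt0.
have [n_le1 | n_gt1] := leqP n 1.
  have -> : n = 1 by lia.
  by exists [:: 1]; apply: divisor_cycle1.
set p := pdiv n; have p_pr : prime p by apply: pdiv_prime.
have [m co_pm nE] := pfactor_coprime p_pr n_gt0; set a := logn p n in nE.
have a_gt0 : 0 < a by rewrite logn_gt0 mem_primes p_pr n_gt0 pdiv_dvd.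
have p_gt1 := prime_gt1 p_pr.
have pa_gt1 : 1 < p ^ a by rewrite -{1}(expn0 p) ltn_exp2l.
have m_gt0 : 0 < m by case: (m) nE n_gt0 => // ->.
have [sk divk] : exists s, divisor_cycle (p ^ a.-1 * m) s.
  apply: IHn; last by rewrite muln_gt0 expn_gt0 ltnW.
  rewrite nE -{2}(prednK a_gt0) expnS; nia.
have [sm divm] : exists s, divisor_cycle m s by apply: IHn => //; rewrite nE; nia.
by rewrite nE mulnC; apply: divisor_cycle_pfactor divk divm.
Qed.

Local Open Scope group_scope.

Section CyclicPowerGraph.
Variable gT : finGroupType.
Implicit Types x y z : gT.

Definition cycle_comparable : rel gT := fun y z => (y \in <[z]>) || (z \in <[y]>).

Lemma mem_cycle_pos_expg y z : y \in <[z]> -> exists k, (0 < k)%N /\ y = z ^+ k.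
Proof.
case/cycleP=> i ->; exists (i + #[z])%N; split; first by rewrite addn_gt0 order_gt0 orbT.
by rewrite expgD expg_order mulg1.
Qed.

Lemma pow_adj_cycle_comparable y z : y != z -> cycle_comparable y z -> pow_adj y z.
Proof.
move=> /eqP y_neq_z /orP[/mem_cycle_pos_expg | /mem_cycle_pos_expg] k_pos.
  by split=> //; left.
by split=> //; right.
Qed.

Lemma is_pow_cycle_cycle (t : seq gT) :
  uniq t -> (3 <= size t)%N -> path.cycle cycle_comparable t -> is_pow_cycle t.
Proof.
move=> uniq_t t_ge3 cyc_t; do 2!split=> //; move=> i lt_i_t.
apply: pow_adj_cycle_comparable; last exact: cycle_nth.
have t_gt0 : (0 < size t)%N by lia.
rewrite nth_uniq ?ltn_mod //.
have [lt_i1_t | ge_i1_t] := ltnP i.+1 (size t); first by rewrite modn_small // neq_ltn ltnSn.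
have -> : i.+1 = size t by lia.
by rewrite modnn; lia.
Qed.

Lemma mem_cycle_order_dvd x y z :
  y \in <[x]> -> z \in <[x]> -> (#[y] %| #[z])%N -> y \in <[z]>.
Proof.
rewrite -!cycle_subG => sub_y sub_z.
by rewrite !orderE (cardSg_cyclic (cycle_cyclic x)).
Qed.

Lemma totient_le_card_order x d :
  (d %| #[x])%N -> (totient d <= #|[set y in <[x]> | #[y] == d]|)%N.
Proof.
move=> d_dvd_x; set a := x ^+ (#[x] %/ d).
have order_a : #[a] = d by rewrite orderXdiv ?dvdn_div // divnA // mulKn.
rewrite -order_a totient_gen; apply: subset_leq_card; apply/subsetP => y.
rewrite !inE /generator => /eqP gen_a.
by rewrite !orderE -gen_a eqxx andbT -cycle_subG -gen_a cycleX.
Qed.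

Lemma pow_cycle_of_order x :
  (3 <= #[x])%N -> exists2 t : seq gT, is_pow_cycle t & size t = #[x].
Proof.
move=> x_ge3; have [s [cyc_s size_s dvd_s tot_s _]] := divisor_cycle_exists (order_gt0 x).
have [t [uniq_t sub_t ts]] : exists t, [/\ uniq t, {subset t <= <[x]>} & map order t = s].
  apply: exists_uniq_lift => d; have [d_dvd_x | d_ndvd_x] := boolP (d %| #[x])%N.
    exact: leq_trans (tot_s d) (totient_le_card_order d_dvd_x).
  rewrite (_ : count_mem d s = 0) //; apply/count_memPn.
  by apply: contra d_ndvd_x => /(allP dvd_s).
have size_t : size t = #[x] by rewrite -size_s -ts size_map.
exists t => //; apply: is_pow_cycle_cycle => //; first by rewrite size_t.
move: cyc_s; rewrite -ts cycle_map.
apply: (sub_in_cycle (P := fun y => y \in <[x]>)); last by apply/allP.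
move=> y z y_x z_x /orP[yz | zy]; apply/orP; [left | right].
  exact: mem_cycle_order_dvd y_x z_x yz.
exact: mem_cycle_order_dvd z_x y_x zy.
Qed.

End CyclicPowerGraph.

Theorem mainTheorem4 (gT : finGroupType) (C : seq gT) :
  (3 <= #|[set: gT]|)%N ->
  is_pow_cycle C ->
  (forall D : seq gT, is_pow_cycle D -> (cycle_length D <= cycle_length C)%N) ->
  forall x : gT, (#[x] <= cycle_length C)%N.
Proof.
(* The bound on #|G| is implied by the existence of the cycle C. *)
move=> _ [_ [size_C _]] max_C x.
have [x_le2 | x_ge3] := leqP #[x] 2; first exact: leq_trans x_le2 (ltnW size_C).
by have [t pow_t <-] := pow_cycle_of_order x_ge3; apply: max_C.
Qed.
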